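(* Let $\mathsf{R}$ be a commutative ring and $f=\sum_{k=1}^t a_k\mathbf{x}^{\mathbf{e}_k}\in\mathsf{R}[x_1,\ldots,x_n]$ with max degree less than $D$ and at most $T$ nonzero terms. Set $\nu = \max(4n, 8\ln(10T))$, and choose $\nu$ vectors $\mathbf{s}\in\mathbb{Z}^n$, independently, according to a distribution such that for any single such random $\mathbf{s}$ and any particular term of $f$, the probability that the term collides with another term in $f(z^{s_1},\ldots,z^{s_n})$ is less than $1/4$. Then, with probability at least $9/10$, every term of $f$ collides with no other term for at least $2n$ of the substitutions.
   Context: Here $\mathbf{x}^{\mathbf{e}} = x_1^{e_1}\cdots x_n^{e_n}$, the $a_k$ are nonzero and the $\mathbf{e}_k$ pairwise distinct; max degree less than $D$ means every variable occurs with exponent less than $D$. The $i$th term collides in the substitution $\mathbf{s}=(s_1,\ldots,s_n)$ if there is $j\ne i$ with $\mathbf{e}_i\cdot\mathbf{s}=\mathbf{e}_j\cdot\mathbf{s}$. *)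

From HB Require Import structures.
From mathcomp Require Import all_boot all_order all_algebra.
From mathcomp Require Import all_classical all_reals all_analysis.
Set Implicit Arguments. Unset Strict Implicit. Unset Printing Implicit Defensive.
Import Order.TTheory GRing.Theory Num.Theory.
Local Open Scope ring_scope.

Definition expvec (n : nat) := {ffun 'I_n -> nat}.
Definition subvec (n : nat) := {ffun 'I_n -> int}.

Definition dotes n (e : expvec n) (s : subvec n) : int :=
  \sum_(i < n) (e i)%:Z * s i.

(* The polynomial f = sum_k a_k x^{e_k} is represented by its t terms
   (coefficients a : 'I_t -> R, exponents e : 'I_t -> N^n). *)
Definition collides n t (e : 'I_t -> expvec n) (s : subvec n) (i : 'I_t) : bool :=
  [exists j : 'I_t, (j != i) && (dotes (e i) s == dotes (e j) s)].

Definition nu (R : realType) (n T : nat) : nat :=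
  maxn (4 * n) `|Num.ceil (8 * ln (10 * T%:R : R))|%N.

Definition prob1 (R : realType) n (p : subvec n -> R) (E : set (subvec n)) : \bar R :=
  \esum_(s in E) (p s)%:E.

(* Probability of an event on nu-tuples of independent samples, each
   distributed according to p (iid product distribution). *)
Definition probN (R : realType) n m (p : subvec n -> R)
  (E : set {ffun 'I_m -> subvec n}) : \bar R :=
  \esum_(w in E) (\prod_(j < m) p (w j))%:E.

From HB Require Import structures.
From mathcomp Require Import all_boot all_order all_algebra.
From mathcomp Require Import all_classical all_reals all_analysis.
From mathcomp Require Import zify ring lra.
Import Order.TTheory GRing.Theory Num.Theory.
Local Open Scope classical_set_scope.
Local Open Scope ring_scope.

(* Fix a term and let S be the number of the nu substitutions in which it
   collides: S is a sum of nu independent indicators of probability q < 1/4,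
   so E[4^S] = (1 + 3q)^nu <= (7/4)^nu.  By Markov's inequality,
   P(S >= nu - 2n) <= (7/4)^nu / 4^(nu - 2n) <= (7/8)^nu <= exp(-nu/8),
   using nu >= 4n, and this is at most 1/(10T) because nu >= 8 ln(10T).
   A union bound over the t <= T terms leaves a failure probability of at
   most 1/10. *)

Section DiscreteSums.
Variables (R : realType) (X : choiceType).
Local Open Scope ereal_scope.

Lemma esumZl (I : set X) (a : X -> \bar R) (r : R) : (0 <= r)%R ->
  (forall x, I x -> 0 <= a x) ->
  \esum_(x in I) (r%:E * a x) = r%:E * \esum_(x in I) a x.
Proof.
move=> r0 a0; rewrite /esum -ereal_supZl//; last first.
  by apply/set0P; exists 0; exists set0 => //; [exact: fsets_set0|rewrite fsbig_set0].
rewrite image_comp; congr ereal_sup; apply: eq_imagel => A [finA AI] /=.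
rewrite !fsbig_finite// [in RHS]big_seq ge0_sume_distrr -?big_seq// => x.
by rewrite in_fset_set// inE => /AI; exact: a0.
Qed.

Lemma esum_markov (A : set X) (w f : X -> R) (c : R) : (0 < c)%R ->
  (forall x, 0 <= w x)%R -> (forall x, 0 <= f x)%R ->
  (forall x, A x -> c <= f x)%R ->
  \esum_(x in A) (w x)%:E <= c^-1%:E * \esum_(x in [set: X]) (w x * f x)%:E.
Proof.
move=> c0 w0 f0 Af; have c0' : (0 <= c^-1)%R by rewrite invr_ge0 ltW.
rewrite -esumZl// => [|x _]; last by rewrite lee_fin mulr_ge0.
rewrite esum_mkcond; apply: le_esum => x _.
case: ifPn => [/set_mem/Af cf|_]; rewrite -EFinM lee_fin; last by rewrite !mulr_ge0.
by rewrite ler_pdivlMl// mulrC ler_wpM2l.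
Qed.

Lemma esum_le_sum_cover (I : finType) (A : set X) (B : I -> set X)
    (a : X -> \bar R) :
  (forall x, 0 <= a x) -> A `<=` \bigcup_i B i ->
  \esum_(x in A) a x <= \sum_(i : I) \esum_(x in B i) a x.
Proof.
move=> a0 AB; have a0_if (C : set X) x : 0 <= if x \in C then a x else 0.
  by case: ifP.
under eq_bigr do rewrite esum_mkcond.
rewrite -esum_sum => [|x i _ _]; last exact: a0_if.
rewrite esum_mkcond; apply: le_esum => x _.
case: ifPn => [/set_mem/AB [i _ Bix]|_]; last exact: sume_ge0.
by rewrite (bigD1 i)//= mem_set// leeDl// sume_ge0.
Qed.

Lemma esum_setC_le (A : set X) (a : X -> \bar R) (r : R) :
  (forall x, 0 <= a x) -> \esum_(x in [set: X]) a x = 1 ->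
  \esum_(x in ~` A) a x <= r%:E -> (1 - r)%:E <= \esum_(x in A) a x.
Proof.
move=> a0 a1 Ar; have := @esumID R X A setT a (fun x _ => a0 x).
rewrite a1 !setTI => E.
by rewrite EFinB leeBlDr// E leeD.
Qed.

End DiscreteSums.

Section IidProduct.
Variables (R : realType) (X : choiceType).
Local Open Scope ereal_scope.

Definition ffun_cons {m} (xf : X * {ffun 'I_m -> X}) : {ffun 'I_m.+1 -> X} :=
  [ffun j => if unlift ord0 j is Some k then xf.2 k else xf.1].

Lemma ffun_cons0 {m} xf : @ffun_cons m xf ord0 = xf.1.
Proof. by rewrite ffunE unlift_none. Qed.

Lemma ffun_consS {m} xf k : @ffun_cons m xf (lift ord0 k) = xf.2 k.
Proof. by rewrite ffunE liftK. Qed.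

Lemma ffun_cons_bij m :
  set_bij [set: X * {ffun 'I_m -> X}] [set: {ffun 'I_m.+1 -> X}] (@ffun_cons m).
Proof.
split=> //.
- move=> [x f] [y h] _ _ E; have := ffun_cons0 (x, f).
  rewrite E ffun_cons0 /= => ->; congr pair; apply/ffunP => k.
  by have := ffun_consS (x, f) k; rewrite E ffun_consS /= => ->.
- move=> w _; exists (w ord0, [ffun k => w (lift ord0 k)]) => //.
  apply/ffunP => j; rewrite ffunE; case: (unliftP ord0 j) => [k ->|->] //=.
  by rewrite ffunE.
Qed.

Lemma esum_prod_ffun (g : X -> R) (s : R) m : (forall x, 0 <= g x)%R ->
  \esum_(x in [set: X]) (g x)%:E = s%:E ->
  \esum_(w in [set: {ffun 'I_m -> X}]) (\prod_(j < m) g (w j))%:E = (s ^+ m)%:E.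
Proof.
move=> g0 gs; have s0 : (0 <= s)%R.
  by rewrite -lee_fin -gs; apply: esum_ge0 => x _; rewrite lee_fin.
elim: m => [|m IH].
  rewrite (_ : [set: {ffun 'I_0 -> X}] = [set ffun0 (card_ord 0)]); last first.
    by apply/seteqP; split=> w //= _; apply/ffunP => -[].
  by rewrite esum_set1 big_ord0 ?expr0// lee_fin.
rewrite (reindex_esum _ _ _ _ (ffun_cons_bij m)).
rewrite (_ : [set: X * _] = [set: X] `*`` fun=> [set: {ffun 'I_m -> X}]); last first.
  by apply/seteqP; split.
rewrite -(esum_esum (a := fun x f => (\prod_(j < m.+1) g (ffun_cons (x, f) j))%:E));
  last by move=> x f _ _; rewrite lee_fin prodr_ge0.
transitivity (\esum_(x in [set: X]) ((s ^+ m)%:E * (g x)%:E)).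
  apply: eq_esum => x _; rewrite muleC -IH.
  rewrite -(@esumZl _ _ _ (fun w : {ffun _ -> X} => (\prod_(j < m) g (w j))%:E))//;
    last by move=> f _; rewrite lee_fin prodr_ge0.
  apply: eq_esum => f _; rewrite big_ord_recl ffun_cons0 EFinM.
  by congr (_ * _%:E); apply: eq_bigr => j _; rewrite ffun_consS.
rewrite (@esumZl _ _ _ (fun x => (g x)%:E)) ?exprn_ge0//;
  last by move=> x _; rewrite lee_fin.
by rewrite (_ : \esum_(x in _) _ = s%:E) -?EFinM ?exprSr.
Qed.

End IidProduct.

Section ExponentialMoment.
Variables (R : realType) (X : choiceType) (p : X -> R).
Hypothesis p_ge0 : forall x, (0 <= p x)%R.
Hypothesis p_sum1 : \esum_(x in [set: X]) (p x)%:E = 1%:E.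
Variable B : pred X.
Local Open Scope ereal_scope.

Section GivenProbability.
Variable q : R.
Hypothesis pB : \esum_(x in [set x | B x]) (p x)%:E = q%:E.
Variable c : R.
Hypothesis c_ge1 : (1 <= c)%R.

Lemma esum_pow_indicator :
  \esum_(x in [set: X]) (p x * c ^+ B x)%:E = (1 + (c - 1) * q)%:E.
Proof.
have c1 : (0 <= c - 1)%R by rewrite subr_ge0.
have p_if x : 0 <= if x \in [set x | B x] then (p x)%:E else 0.
  by case: ifP; rewrite ?lee_fin.
transitivity (\esum_(x in [set: X])
  ((p x)%:E + (c - 1)%:E * if x \in [set x | B x] then (p x)%:E else 0)).
  apply: eq_esum => x _; case Bx: (B x).
    by rewrite mem_set//= expr1 -EFinM -EFinD; congr _%:E; ring.
  by rewrite memNset /= ?Bx// expr0 mulr1 mule0 adde0.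
rewrite esumD => [|x _|x _]; last 2 first.
- by rewrite lee_fin.
- by rewrite mule_ge0 ?lee_fin.
rewrite (@esumZl _ _ _ (fun x => if x \in [set x | B x] then (p x)%:E else 0))//.
by rewrite -esum_mkcond p_sum1 pB -EFinM -EFinD.
Qed.

Lemma esum_pow_count m :
  \esum_(w in [set: {ffun 'I_m -> X}])
     ((\prod_(j < m) p (w j)) * c ^+ #|[pred j | B (w j)]|)%:E
  = ((1 + (c - 1) * q) ^+ m)%:E.
Proof.
have c0 : (0 <= c)%R by rewrite (le_trans ler01).
rewrite -(@esum_prod_ffun _ _ _ _ m _ esum_pow_indicator) => [|x]; last first.
  by rewrite mulr_ge0 ?exprn_ge0.
apply: eq_esum => w _; rewrite big_split /= prodrXr.
congr (_ * c ^+ _)%:E; rewrite -sum1_card [LHS]big_mkcond.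
by apply: eq_bigr => j _; rewrite inE; case: (B (w j)).
Qed.

Lemma esum_count_tail_le m k :
  \esum_(w in [set w : {ffun 'I_m -> X} | (k <= #|[pred j | B (w j)]|)%N])
     (\prod_(j < m) p (w j))%:E
  <= ((1 + (c - 1) * q) ^+ m / c ^+ k)%:E.
Proof.
have ck : (0 < c ^+ k)%R by rewrite exprn_gt0// (lt_le_trans ltr01).
apply: le_trans (@esum_markov R {ffun 'I_m -> X} _
  (fun w => \prod_(j < m) p (w j))%R
  (fun w => c ^+ #|[pred j | B (w j)]|)%R _ ck _ _ _) _.
- by move=> w; rewrite prodr_ge0.
- by move=> w; rewrite exprn_ge0// (le_trans ler01).
- by move=> w /= kB; rewrite ler_weXn2l.
by rewrite esum_pow_count -EFinM mulrC.
Qed.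

End GivenProbability.

Lemma esum_count_tail_le_quarter m k :
  \esum_(x in [set x | B x]) (p x)%:E < (1 / 4 : R)%:E ->
  \esum_(w in [set w : {ffun 'I_m -> X} | (k <= #|[pred j | B (w j)]|)%N])
     (\prod_(j < m) p (w j))%:E
  <= ((7 / 4 : R) ^+ m / 4 ^+ k)%:E.
Proof.
have : 0 <= \esum_(x in [set x | B x]) (p x)%:E.
  by apply: esum_ge0 => x _; rewrite lee_fin.
case pB: (\esum_(x in _) _) => [q||] //=; rewrite lte_fin lee_fin => q0 q14.
have four_ge1 : (1 <= 4 :> R)%R by rewrite ler1n.
apply: le_trans (@esum_count_tail_le _ pB _ four_ge1 m k) _.
rewrite lee_fin ler_pM2r ?invr_gt0 ?exprn_gt0//.
by apply: lerXn2r; rewrite ?nnegrE; lra.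
Qed.

End ExponentialMoment.

Lemma card_predC_lt_sub m (P : pred 'I_m) c :
  (#|[pred j | ~~ P j]| < c)%N -> (m - c <= #|P|)%N.
Proof.
have : (#|P| + #|[pred j | ~~ P j]| = m)%N.
  by apply: etrans (card_ord m); rewrite -(cardC P); congr addn; apply: eq_card.
lia.
Qed.

Section Numerics.
Variable R : realType.

Lemma pow_7_4_div_pow_4_le m k : (m <= 2 * k)%N ->
  (7 / 4 : R) ^+ m / 4 ^+ k <= (7 / 8) ^+ m.
Proof.
move=> m2k; rewrite ler_pdivrMr ?exprn_gt0//.
have -> : (7 / 4 : R) ^+ m = (7 / 8) ^+ m * 2 ^+ m.
  by rewrite -exprMn; congr (_ ^+ _); field.
rewrite ler_wpM2l ?exprn_ge0// (_ : 4 = 2 ^+ 2 :> R); last by rewrite expr2 -natrM.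
by rewrite -exprM ler_weXn2l ?ler1n.
Qed.

Lemma pow_7_8_le_expR m : (7 / 8 : R) ^+ m <= expR (- (m%:R / 8)).
Proof.
rewrite (_ : - (m%:R / 8) = m%:R * (- (1 / 8))) ?expRM_natl; last by lra.
have := expR_ge1Dx (- (1 / 8) : R).
by move=> ?; apply: lerXn2r; rewrite ?nnegrE ?expR_ge0//; lra.
Qed.

Lemma ln_le_nu n T : 8 * ln (10 * T%:R : R) <= (nu R n T)%:R.
Proof.
apply: le_trans (ceil_ge _) _.
rewrite (_ : (nu R n T)%:R = (nu R n T)%:Z%:~R :> R)// ler_int.
by rewrite (le_trans (ler_norm _))// -abszE lez_nat leq_maxr.
Qed.

Lemma pow_7_8_nu_le n T : (0 < T)%N ->
  (7 / 8 : R) ^+ nu R n T <= (10 * T%:R)^-1.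
Proof.
move=> T0; have T10 : 0 < 10 * T%:R :> R by rewrite mulr_gt0 ?ltr0n.
apply: le_trans (pow_7_8_le_expR _) _.
rewrite -[X in _ <= X^-1]lnK ?posrE// -expRN ler_expR.
by have := ln_le_nu n T; lra.
Qed.

Lemma nu_union_bound n T t : (t <= T)%N ->
  t%:R * ((7 / 4 : R) ^+ nu R n T / 4 ^+ (nu R n T - 2 * n)) <= 1 / 10.
Proof.
move=> tT; have [T0|T0] := posnP T.
  by move: tT; rewrite T0 leqn0 => /eqP ->; rewrite mul0r; lra.
have m2k : (nu R n T <= 2 * (nu R n T - 2 * n))%N.
  by have := leq_maxl (4 * n) `|Num.ceil (8 * ln (10 * T%:R : R))|%N; rewrite /nu; lia.
apply: le_trans (ler_wpM2l (ler0n _ _) (pow_7_4_div_pow_4_le _ _ m2k)) _.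
apply: le_trans (ler_wpM2l (ler0n _ _) (pow_7_8_nu_le n _ T0)) _.
have tTR : t%:R <= T%:R :> R by rewrite ler_nat.
have TR : 1 <= T%:R :> R by rewrite ler1n.
by rewrite ler_pdivrMr ?mulr_gt0 ?ltr0n //; lra.
Qed.

End Numerics.

Theorem lemma5p1 (Rg : comNzRingType) (R : realType) (n D T t : nat)
  (a : 'I_t -> Rg) (e : 'I_t -> expvec n)
  (ha : forall k, a k != 0)
  (he : injective e)
  (hD : forall k i, (e k i < D)%N)
  (hT : (t <= T)%N)
  (p : subvec n -> R)
  (hp0 : forall s, 0 <= p s)
  (hp1 : prob1 p setT = 1%E)
  (hcol : forall i : 'I_t,
     (prob1 p [set s | collides e s i] < (1 / 4 : R)%:E)%E) :
  ((9 / 10 : R)%:E <=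
     probN p [set w : {ffun 'I_(nu R n T) -> subvec n} |
                forall i : 'I_t,
                  (2 * n <= #|[pred j : 'I_(nu R n T) | ~~ collides e (w j) i]|)%N])%E.
Proof.
(* Only the collision bound hcol matters: the coefficients, the distinctness
   of the exponents and the degree bound play no role. *)
set m := nu R n T; set G := [set w | _]; pose k := (m - 2 * n)%N.
pose Bad i := [set w : {ffun 'I_m -> subvec n} |
                (k <= #|[pred j | collides e (w j) i]|)%N].
have cover : ~` G `<=` \bigcup_i Bad i.
  move=> w /= /existsNP [i /negP]; rewrite -ltnNge => few.
  by exists i => //; exact: card_predC_lt_sub.
have total : (\esum_(w in [set: {ffun 'I_m -> subvec n}])
                 (\prod_(j < m) p (w j))%:E = 1)%E.
  by rewrite (@esum_prod_ffun _ _ _ _ _ hp0 hp1) expr1n.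
have bad : (\esum_(w in ~` G) (\prod_(j < m) p (w j))%:E <= (1 / 10 : R)%:E)%E.
  apply: le_trans (@esum_le_sum_cover _ _ _ _ _
    (fun w : {ffun _ -> _} => (\prod_(j < m) p (w j))%:E) _ cover) _ => [w|].
    by rewrite lee_fin prodr_ge0.
  apply: (@le_trans _ _ (\sum_(i < t) ((7 / 4 : R) ^+ m / 4 ^+ k)%:E)%E).
    by apply: lee_sum => i _; exact: (@esum_count_tail_le_quarter _ _ _ hp0 hp1
      (fun s => collides e s i) m k (hcol i)).
  by rewrite sumEFin lee_fin sumr_const card_ord -[_ *+ t]mulr_natl nu_union_bound.
rewrite (_ : 9 / 10 = 1 - 1 / 10 :> R); last by lra.
by apply: esum_setC_le total bad => w; rewrite lee_fin prodr_ge0.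
Qed.
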